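(* Let $M,N\ge0$ be integers and $a,b,c,d,q$ generic complex parameters. For all $\alpha,\beta\in\{0,1\}$, all $0\le k\le M$, $0\le j\le N$ and $0\le l\le M+N$, $$R_{k+j}^l(a,b,c,d;M+N;q)=\sum_{\substack{m+n=l\\0\le m\le M,\ 0\le n\le N}}R_k^m\big(aq^{\alpha j},bq^{\beta(N-j)},c,d;M;q\big)\,R_j^n\big(aq^{(1-\alpha)k},bq^{(1-\beta)(M-k)},cq^m,dq^{M-m};N;q\big).$$
   Context: $h_k(x;a)=\prod_{j=0}^{k-1}(1-axq^j+a^2q^{2j})$. For generic parameters, $R_k^l(a,b,c,d;N;q)$ ($0\le k,l\le N$) are the unique coefficients with $h_k(x;a)h_{N-k}(x;b)=\sum_{l=0}^N R_k^l(a,b,c,d;N;q)h_l(x;c)h_{N-l}(x;d)$ as polynomials in $x$. *)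

From HB Require Import structures.
From mathcomp Require Import all_boot all_order all_algebra.
From Stdlib Require Import ClassicalEpsilon.
Set Implicit Arguments. Unset Strict Implicit. Unset Printing Implicit Defensive.
Import Order.TTheory GRing.Theory.
Local Open Scope ring_scope.

Section Defs.
Variable F : fieldType.

Definition hpol (q : F) (k : nat) (a : F) : {poly F} :=
  \prod_(i < k) ((1 + a ^+ 2 * q ^+ (2 * i))%:P - (a * q ^+ i) *: 'X).

(* the family h_l(x;c) h_{N-l}(x;d), 0 <= l <= N, is linearly independent
   (this is exactly the condition making the coefficients R unique) *)
Definition hfree (q c d : F) (N : nat) : Prop :=
  forall r : nat -> F,
    \sum_(l < N.+1) r l *: (hpol q l c * hpol q (N - l) d) = 0 ->
    forall l, (l <= N)%N -> r l = 0.

Definition Rexp (q a b c d : F) (N k : nat) (r : nat -> F) : Prop :=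
  hpol q k a * hpol q (N - k) b
  = \sum_(l < N.+1) r l *: (hpol q l c * hpol q (N - l) d).

(* R_k^l(a,b,c,d;N;q): a chosen family of coefficients satisfying Rexp
   (unique on 0 <= l <= N whenever hfree q c d N holds). *)
Definition Rcoef (q a b c d : F) (N k l : nat) : F :=
  epsilon (inhabits (fun _ : nat => (0 : F))) (Rexp q a b c d N k) l.

End Defs.

(* Since h_{k+j}(x;a) = h_k(x;a q^j) h_j(x;a) = h_k(x;a) h_j(x;a q^k), the left-hand
   product h_{k+j}(x;a) h_{M+N-k-j}(x;b) splits as an (M;k)-product times an (N;j)-product.
   Expanding the first in the basis h_m(x;c) h_{M-m}(x;d) and then each
   h_j h_{N-j} in the basis h_n(x;c q^m) h_{N-n}(x;d q^(M-m)) recombines, by the same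
   splitting rule, into the basis h_l(x;c) h_{M+N-l}(x;d) with l = m + n; uniqueness
   of the coefficients gives the formula. *)
From HB Require Import structures.
From mathcomp Require Import all_boot all_order all_algebra.
From Stdlib Require Import ClassicalEpsilon.
From mathcomp Require Import zify.
Import GRing.Theory.
Local Open Scope ring_scope.

Set Implicit Arguments. Unset Strict Implicit.

Lemma sum_convolution (R : nzRingType) (V : lmodType R) (M N : nat)
    (f : nat -> nat -> R) (E : nat -> V) :
  \sum_(m < M.+1) \sum_(n < N.+1) f m n *: E (m + n)%N
  = \sum_(l < (M + N).+1)
      (\sum_(m < M.+1) \sum_(n < N.+1 | (m + n == l)%N) f m n) *: E l.
Proof.
under [RHS]eq_bigr => l _ do rewrite scaler_suml.
rewrite [RHS]exchange_big /=; apply: eq_bigr => m _.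
under [RHS]eq_bigr => l _ do rewrite scaler_suml big_mkcond.
rewrite [RHS]exchange_big /=; apply: eq_bigr => n _.
have mn_lt : (m + n < (M + N).+1)%N by have := ltn_ord m; have := ltn_ord n; lia.
rewrite -big_mkcond /= (eq_bigl (pred1 (Ordinal mn_lt))) ?big_pred1_eq //.
Qed.

Section HPoly.
Variables (F : fieldType) (q : F).

Lemma size_hpol (a : F) k : (size (hpol q k a) <= k.+1)%N.
Proof.
elim: k => [|k IH]; first by rewrite /hpol big_ord0 size_poly1.
rewrite /hpol big_ord_recr /= -/(hpol q k a).
apply: leq_trans (size_polyMleq _ _) _.
have size_factor :
    (size ((1 + a ^+ 2 * q ^+ (2 * k))%:P - (a * q ^+ k) *: 'X)%R <= 2)%N.
  apply: leq_trans (size_polyD _ _) _; rewrite geq_max size_polyN.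
  by rewrite (leq_trans (size_polyC_leq1 _)) // (leq_trans (size_scale_leq _ _)) ?size_polyX.
lia.
Qed.

Lemma hpolD (a : F) m n : hpol q (m + n) a = hpol q m a * hpol q n (a * q ^+ m).
Proof.
rewrite /hpol big_split_ord /=; congr (_ * _); apply: eq_bigr => i _ /=.
rewrite exprMn -exprM -mulrA -exprD.
have -> : (2 * (m + i) = m * 2 + 2 * i)%N by lia.
by rewrite exprD mulrA.
Qed.

Lemma hpolD_shift (al : bool) (a : F) k j :
  hpol q (k + j) a
  = hpol q k (a * q ^+ (al * j)) * hpol q j (a * q ^+ ((~~ al) * k)).
Proof.
case: al; rewrite /= ?mul1n ?mul0n expr0 mulr1; last exact: hpolD.
by rewrite addnC hpolD mulrC.
Qed.

Lemma size_hpol_basis (c d : F) N l : (l <= N)%N ->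
  (size (hpol q l c * hpol q (N - l) d)%R <= N.+1)%N.
Proof.
move=> lN; apply: leq_trans (size_polyMleq _ _) _.
by have := size_hpol c l; have := size_hpol d (N - l); lia.
Qed.

Lemma hpol_basisM (c d : F) M N m n : (m <= M)%N -> (n <= N)%N ->
  hpol q m c * hpol q (M - m) d
    * (hpol q n (c * q ^+ m) * hpol q (N - n) (d * q ^+ (M - m)))
  = hpol q (m + n) c * hpol q (M + N - (m + n)) d.
Proof.
move=> mM nN; have -> : (M + N - (m + n) = (M - m) + (N - n))%N by lia.
by rewrite !hpolD mulrACA.
Qed.

(* The basis has N+1 elements of size at most N+1, so freeness makes the
   coefficient matrix invertible. *)
Lemma hfree_span (c d : F) N (p : {poly F}) : hfree q c d N -> (size p <= N.+1)%N ->
  exists r : nat -> F, p = \sum_(l < N.+1) r l *: (hpol q l c * hpol q (N - l) d).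
Proof.
move=> free_cd size_p.
pose E l := hpol q l c * hpol q (N - l) d.
pose A : 'M[F]_N.+1 := \matrix_(i < N.+1) poly_rV (E i).
have mulA v : rVpoly (v *m A) = \sum_(i < N.+1) v 0 i *: E i.
  rewrite mulmx_sum_row linear_sum; apply: eq_bigr => i _.
  by rewrite linearZ /= rowK poly_rV_K // size_hpol_basis // -ltnS.
have unitA : A \in unitmx.
  rewrite unitmxE unitfE; apply/negP => /det0P [v /negP v_neq0 vA0].
  apply: v_neq0; apply/eqP/rowP => i; rewrite mxE.
  rewrite -[i in LHS]inord_val; apply: (free_cd (fun l => v 0 (inord l)) _ i (ltn_ord i)).
  have := mulA v; rewrite vA0 linear0 => sum0; rewrite [RHS]sum0.
  by apply: eq_bigr => l _; rewrite inord_val.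
exists (fun l => (poly_rV p *m invmx A) 0 (inord l)).
rewrite -{1}(poly_rV_K size_p) -{1}(mulmxKV unitA (poly_rV p)) mulA.
by apply: eq_bigr => l _; rewrite inord_val.
Qed.

Lemma RcoefP (a b c d : F) N k : hfree q c d N -> (k <= N)%N ->
  Rexp q a b c d N k (Rcoef q a b c d N k).
Proof.
move=> free_cd kN; apply: (epsilon_spec _ (Rexp q a b c d N k)).
by apply: hfree_span => //; apply: size_hpol_basis.
Qed.

Lemma Rexp_uniq (a b c d : F) N k r1 r2 l : hfree q c d N ->
  Rexp q a b c d N k r1 -> Rexp q a b c d N k r2 -> (l <= N)%N -> r1 l = r2 l.
Proof.
move=> free_cd e1 e2 lN; apply/eqP; rewrite -subr_eq0; apply/eqP.
apply: (free_cd (fun i => r1 i - r2 i)) => //.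
under eq_bigr => i _ do rewrite scalerBl.
by rewrite sumrB -e1 -e2 subrr.
Qed.

Lemma Rexp_mul (a1 b1 a2 b2 c d : F) M N k j r1 (r2 : nat -> nat -> F) :
  Rexp q a1 b1 c d M k r1 ->
  (forall m, (m <= M)%N ->
     Rexp q a2 b2 (c * q ^+ m) (d * q ^+ (M - m)) N j (r2 m)) ->
  hpol q k a1 * hpol q (M - k) b1 * (hpol q j a2 * hpol q (N - j) b2)
  = \sum_(l < (M + N).+1)
      (\sum_(m < M.+1) \sum_(n < N.+1 | (m + n == l)%N) r1 m * r2 m n)
        *: (hpol q l c * hpol q (M + N - l) d).
Proof.
move=> e1 e2.
rewrite -(sum_convolution _ _ (fun m n => r1 m * r2 m n)
                          (fun l => hpol q l c * hpol q (M + N - l) d)) e1 mulr_suml; apply: eq_bigr => m _.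
rewrite -scalerAl (e2 m (ltn_ord m)) mulr_sumr scaler_sumr; apply: eq_bigr => n _.
by rewrite -scalerAr scalerA hpol_basisM // -ltnS.
Qed.

End HPoly.

Theorem mainTheorem8 (F : fieldType) (q a b c d : F) (M N : nat) :
  hfree q c d M ->
  (forall m, (m <= M)%N -> hfree q (c * q ^+ m) (d * q ^+ (M - m)) N) ->
  hfree q c d (M + N) ->
  forall (al be : bool) (k j l : nat),
    (k <= M)%N -> (j <= N)%N -> (l <= M + N)%N ->
    Rcoef q a b c d (M + N) (k + j) l
    = \sum_(m < M.+1) \sum_(n < N.+1 | (m + n == l)%N)
        Rcoef q (a * q ^+ (al * j)) (b * q ^+ (be * (N - j))) c d M k m
        * Rcoef q (a * q ^+ ((~~ al) * k)) (b * q ^+ ((~~ be) * (M - k)))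
                (c * q ^+ m) (d * q ^+ (M - m)) N j n.
Proof.
move=> free_M free_N free_MN al be k j l kM jN lMN.
apply: (Rexp_uniq (r2 := fun l => _) free_MN _ _ lMN); first by apply: RcoefP => //; lia.
rewrite /Rexp.
have -> : (M + N - (k + j) = (M - k) + (N - j))%N by lia.
rewrite (hpolD_shift q al) (hpolD_shift q be) mulrACA.
apply: (Rexp_mul (r1 := Rcoef q _ _ c d M k)
                 (r2 := fun m => Rcoef q _ _ (c * q ^+ m) (d * q ^+ (M - m)) N j)).
  exact: RcoefP.
by move=> m mM; apply: RcoefP => //; apply: free_N.
Qed.
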